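(* Let $\alpha$ be an action of a group $\Gamma$ by homeomorphisms on an infinite Hausdorff topological space $X$. Then $\alpha$ is highly topologically transitive if and only if one of the following holds: (i) $X$ is perfect (has no isolated points) and for every $d\ge1$ the diagonal action $\alpha^d$ on $X^d$ (product topology) is topologically transitive; or (ii) the set of isolated points of $X$ is dense in $X$, and the restriction of $\alpha$ to this set is highly transitive (in particular this set is a single orbit).
   Context: For an action by homeomorphisms on a Hausdorff space $X$: it is topologically transitive if for all nonempty open $U,V\subseteq X$ there is $\gamma$ with $U\alpha(\gamma)\cap V\neq\emptyset$; for $d\ge1$ it is $d$-topologically transitive if the diagonal action on $X^{(d)}=\{(x_1,\dots,x_d)\in X^d:x_i\neq x_j\text{ for } i\ne j\}$ (topology induced from $X^d$) is topologically transitive; for infinite $X$ it is highly topologically transitive if it is $d$-topologically transitive for every $d\ge1$. An action on an infinite set is highly transitive if for every $d$, all pairwise distinct $x_1,\dots,x_d$ and all pairwise distinct $y_1,\dots,y_d$, some group element maps $x_i$ to $y_i$ for all $i$. *)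

From HB Require Import structures.
From mathcomp Require Import all_boot monoid.
From mathcomp Require Import boolp classical_sets functions cardinality topology.
Set Implicit Arguments. Unset Strict Implicit. Unset Printing Implicit Defensive.
Local Open Scope classical_set_scope.

(* A (right) action of the group G on a topological space X by homeomorphisms:
   x (gh) = (x g) h, x 1 = x, and every alpha g is continuous (its inverse
   alpha g^-1 is then continuous as well, so alpha g is a homeomorphism). *)
Definition is_action (G : groupType) (X : Type) (alpha : G -> X -> X) :=
  (forall x, alpha 1%g x = x) /\
  (forall g h x, alpha (g * h)%g x = alpha h (alpha g x)).

Definition homeo_action (G : groupType) (X : topologicalType)
  (alpha : G -> X -> X) :=
  is_action alpha /\ (forall g, continuous (alpha g)) /\
  (forall g, bijective (alpha g)).

(* Topological transitivity of an action of G on the subspace S of Y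
   (subspace topology: the open sets of S are the U `&` S, U open in Y). *)
Definition top_trans_on (G : Type) (Y : topologicalType) (S : set Y)
  (a : G -> Y -> Y) :=
  forall U V : set Y, open U -> open V ->
    (U `&` S) !=set0 -> (V `&` S) !=set0 ->
    exists g, (a g @` (U `&` S)) `&` (V `&` S) !=set0.

Definition top_trans (G : Type) (Y : topologicalType) (a : G -> Y -> Y) :=
  top_trans_on setT a.

(* X^d as {ptws 'I_d -> X}: 'I_d -> X with the product topology; diagonal action. *)
Definition diag_action (G : Type) (X : topologicalType) (alpha : G -> X -> X)
  (d : nat) : G -> {ptws 'I_d -> X} -> {ptws 'I_d -> X} :=
  fun g x => alpha g \o x.
Arguments diag_action {G X} alpha d.

Definition distinct_tuples (X : topologicalType) (d : nat)
  : set {ptws 'I_d -> X} :=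
  [set x | injective x].

Definition d_top_trans (G : Type) (X : topologicalType) (alpha : G -> X -> X)
  (d : nat) :=
  top_trans_on (@distinct_tuples X d) (diag_action alpha d).

Definition highly_top_trans (G : Type) (X : topologicalType)
  (alpha : G -> X -> X) :=
  forall d, (1 <= d)%N -> d_top_trans alpha d.

Definition highly_trans_on (G : Type) (X : Type) (A : set X)
  (alpha : G -> X -> X) :=
  infinite_set A /\
  forall (d : nat) (x y : 'I_d -> X), injective x -> injective y ->
    (forall i, A (x i)) -> (forall i, A (y i)) ->
    exists g, forall i, alpha g (x i) = y i.

From HB Require Import structures.
From mathcomp Require Import all_boot monoid.
From mathcomp Require Import boolp classical_sets functions cardinality topology.
Set Implicit Arguments. Unset Strict Implicit. Unset Printing Implicit Defensive.
Local Open Scope classical_set_scope.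

(* In a perfect T1 space every nonempty open subset of X^d meets X^(d), so
   transitivity on X^d and on X^(d) are equivalent (the preimage of an open set
   under a diagonal homeomorphism being open).  If X has an isolated point x,
   1-transitivity moves x into every nonempty open set, so the isolated points
   are dense; then X^(d) is approximated by tuples of isolated points, which
   are open singletons of X^d, and d-transitivity between two such singletons
   is exactly d-fold transitivity.  Hausdorffness keeps the approximating
   tuples injective. *)

Section box_neighbourhoods.
Variables (I : finType) (X : topologicalType).
Local Notation XI := {ptws I -> X}.

Definition box (B : I -> set X) : set XI := [set v | forall i, B i (v i)].

Definition box_nbhs (f : XI) : set_system XI :=
  [set U | exists2 B, (forall i, nbhs (f i) (B i)) & box B `<=` U].

Lemma box_nbhs_filter f : Filter (box_nbhs f).
Proof.
split.
- by exists (fun=> setT) => // i; exact: filterT.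
- move=> P Q [B nB BP] [C nC CQ]; exists (fun i => B i `&` C i).
    by move=> i; exact: filterI.
  by move=> v BCv; split; [apply: BP => i|apply: CQ => i]; case: (BCv i).
- by move=> P Q PQ [B nB BP]; exists B => // v /BP /PQ.
Qed.

Lemma nbhs_proj (f : XI) i (A : set X) :
  nbhs (f i) A -> nbhs f [set v : XI | A (v i)].
Proof. exact: (@proj_continuous I (fun=> X) i f A). Qed.

Lemma nbhs_box (f : XI) (B : I -> set X) :
  (forall i, nbhs (f i) (B i)) -> nbhs f (box B).
Proof.
move=> nB.
exact: (@filter_forall _ _ (fun i (v : XI) => B i (v i)) (nbhs f) _
  (fun i => nbhs_proj (nB i))).
Qed.

Lemma nbhs_boxP (f : XI) (U : set XI) :
  nbhs f U <-> exists2 B, (forall i, nbhs (f i) (B i)) & box B `<=` U.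
Proof.
split; last by move=> [B /nbhs_box nB BU]; exact: filterS nB.
move=> fU; have bF := box_nbhs_filter f.
suff /(_ U fU) : box_nbhs f --> f by [].
(* [nbhs f] is the supremum of the initial topologies of the projections. *)
apply/cvg_sup => i A /=.
rewrite (@nbhsE (initial_topology (fun g : forall _ : I, X => g i))).
move=> -[_ [[C oC <-] Cfi] CA]; exists (fun j => if j == i then C else setT).
  by move=> j; case: eqP => [->|_]; [exact: open_nbhs_nbhs|exact: filterT].
by move=> v /(_ i); rewrite eqxx => /CA.
Qed.

Lemma open_set1_ptws (f : XI) :
  (forall i, nbhs (f i) [set f i]) -> open [set f].
Proof.
move=> nf; rewrite openE => _ ->; apply: filterS (nbhs_box nf) => v vf.
exact: funext.
Qed.

Lemma open_comp_preimage (h : X -> X) (U : set XI) :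
  continuous h -> open U -> open ((fun v : XI => h \o v) @^-1` U).
Proof.
move=> ch oU; rewrite openE => f /= Uhf.
have [B nB BU] := (nbhs_boxP _ _).1 (open_nbhs_nbhs (conj oU Uhf)).
apply: filterS (nbhs_box (B := fun i => h @^-1` B i) _).
  by move=> v hBv; apply: BU.
by move=> i; exact: ch (nB i).
Qed.

End box_neighbourhoods.

Lemma exists_injective_tuple (T : eqType) (d : nat) (B : 'I_d -> set T) :
  (forall i (s : seq T), exists2 x, B i x & x \notin s) ->
  exists2 a : 'I_d -> T, injective a & forall i, B i (a i).
Proof.
elim: d B => [|d IH] B hB.
  by exists (fun i : 'I_0 => False_rect _ (notF (ltn_ord i))) => -[].
have [a' ia' Ba'] := IH (fun j => B (lift ord_max j)) (fun j => hB _).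
have [x Bx xa'] := hB ord_max (codom a').
pose a i := if unlift ord_max i is Some j then a' j else x.
have a'_neq_x j : a' j != x by apply: contraNneq xa' => <-; exact: codom_f.
exists a => [i k|i]; rewrite /a.
  case: (unliftP ord_max i) => [j ->|->];
    case: (unliftP ord_max k) => [l ->|->] //.
  - by move=> /ia' ->.
  - by move/eqP; rewrite (negPf (a'_neq_x j)).
  - by move/eqP; rewrite eq_sym (negPf (a'_neq_x l)).
by case: (unliftP ord_max i) => [j ->|->].
Qed.

Section isolated_points.
Variable X : topologicalType.

Lemma isolatedT_nbhs1 (x : X) : isolated [set: X] x <-> nbhs x [set x].
Proof.
split; first by move=> [_ [V nV]]; rewrite setIT => <-.
by move=> nx; split; [rewrite in_setT|exists [set x]; rewrite ?setIT].
Qed.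

Lemma dense_finite_setT (A : set X) :
  accessible_space X -> dense A -> finite_set A -> A = [set: X].
Proof.
move=> aX dA fA; apply/seteqP; split => // x _; apply: contrapT => Ax.
have oAC := closed_openC (accessible_finite_set_closed.1 aX A fA).
by have [y [nAy Ay]] := dA (~` A) (ex_intro _ x Ax) oAC; apply: nAy.
Qed.

Lemma perfect_nbhs_avoid (z : X) (W : set X) (s : seq X) :
  accessible_space X -> isolated [set: X] = set0 -> nbhs z W ->
  exists2 x, W x & x \notin s.
Proof.
move=> aX iso nW; pose W' := W `\` ([set` s] `\ z).
have nW' : nbhs z W'.
  have sz_closed : closed ([set` s] `\ z).
    apply: (accessible_finite_set_closed.1 aX).
    by apply: (sub_finite_set _ (finite_seq s)) => x [].
  apply: filterI nW (open_nbhs_nbhs _); split; last by move=> [_ []].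
  exact: closed_openC.
have [x [W'x xz]] : exists x, W' x /\ x != z.
  apply: contrapT => /forallNP noW'.
  suff : isolated [set: X] z by rewrite iso.
  apply/isolatedT_nbhs1; apply: filterS nW' => x W'x.
  by apply: contrapT => /eqP xz; apply: (noW' x).
case: W'x => Wx sx; exists x => //.
by apply/negP => xs; apply: sx; split => //; exact/eqP.
Qed.

Lemma perfect_distinct_tuples (d : nat) (U : set {ptws 'I_d -> X}) :
  accessible_space X -> isolated [set: X] = set0 ->
  open U -> U !=set0 -> (U `&` @distinct_tuples X d) !=set0.
Proof.
move=> aX iso oU [u Uu].
have [B nB BU] := (nbhs_boxP _ _).1 (open_nbhs_nbhs (conj oU Uu)).
have [v iv Bv] :=
  exists_injective_tuple (fun i s => perfect_nbhs_avoid s aX iso (nB i)).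
by exists v; split => //; exact: BU.
Qed.

Lemma hausdorff_trivIset_nbhs (I : finType) (u : I -> X) :
  hausdorff_space X -> injective u ->
  exists2 W : I -> set X, (forall i, nbhs (u i) (W i)) & trivIset setT W.
Proof.
rewrite open_hausdorff => hX iu.
have sep (p : I * I) : exists AB : set X * set X, p.1 != p.2 ->
    [/\ nbhs (u p.1) AB.1, nbhs (u p.2) AB.2 & AB.1 `&` AB.2 = set0].
  have [_|ij] := eqVneq p.1 p.2; first by exists (setT, setT).
  have uij : u p.1 != u p.2 by apply: contra ij => /eqP /iu ->.
  have [[A B] [/= /set_mem uA /set_mem uB] [oA oB /eqP AB0]] := hX _ _ uij.
  by exists (A, B) => _; split => //; apply: open_nbhs_nbhs.
have [AB hAB] := choice sep.
exists (fun i =>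
    [set x | forall j, j != i -> (AB (i, j)).1 x /\ (AB (j, i)).2 x]).
  move=> i; apply: (@filter_forall _ _
    (fun j x => j != i -> (AB (i, j)).1 x /\ (AB (j, i)).2 x)
    (nbhs (u i)) _) => j.
  have [->|ji] := eqVneq j i; first exact: nearW.
  have [n1 _ _] := hAB (i, j) ltac:(by rewrite /= eq_sym).
  have [_ n2 _] := hAB (j, i) ji.
  by apply: filterS (filterI n1 n2) => x [].
move=> i j _ _ [x [Wi Wj]]; apply/eqP; apply: contraT => ij.
have [_ _ AB0] := hAB (i, j) ij.
have [ABi _] := Wi j ltac:(by rewrite eq_sym).
have [_ ABj] := Wj i ij.
by have : ((AB (i, j)).1 `&` (AB (i, j)).2) x by []; rewrite AB0.
Qed.

Lemma dense_isolated_distinct_tuples (d : nat) (U : set {ptws 'I_d -> X}) :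
  hausdorff_space X -> dense (isolated [set: X]) -> open U ->
  (U `&` @distinct_tuples X d) !=set0 ->
  exists2 v, (U `&` @distinct_tuples X d) v & forall i, isolated [set: X] (v i).
Proof.
move=> hX dI oU [u [Uu iu]].
have [B nB BU] := (nbhs_boxP _ _).1 (open_nbhs_nbhs (conj oU Uu)).
have [W nW trW] := hausdorff_trivIset_nbhs hX iu.
have pick i : exists x, interior (B i `&` W i) x /\ isolated [set: X] x.
  have BWi : interior (B i `&` W i) !=set0 by exists (u i); exact: filterI.
  by have [x []] := dI _ BWi (@open_interior _ _); exists x.
have [v hv] := choice pick.
have BWv i : (B i `&` W i) (v i) by apply: interior_subset; case: (hv i).
exists v => [|i]; last by case: (hv i).
split; first by apply: BU => i; case: (BWv i).
move=> i j vij; apply: trW => //; exists (v i); split; first by case: (BWv i).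
by rewrite vij; case: (BWv j).
Qed.

End isolated_points.

Section topologically_transitive_actions.
Variables (G : Type) (X : topologicalType) (alpha : G -> X -> X).

Lemma d_top_trans_isolated (d : nat) (x : {ptws 'I_d -> X})
    (V : set {ptws 'I_d -> X}) :
  d_top_trans alpha d -> injective x -> (forall i, isolated [set: X] (x i)) ->
  open V -> (V `&` @distinct_tuples X d) !=set0 -> exists g, V (alpha g \o x).
Proof.
move=> hT ix Ix oV V0.
have ox : open [set x] by apply: open_set1_ptws => i; exact/isolatedT_nbhs1.
have [g [_ [[_ [-> _] <-] [Vgx _]]]] :=
  hT _ V ox oV (ex_intro _ x (conj erefl ix)) V0.
by exists g.
Qed.

Lemma highly_top_trans_diag : accessible_space X -> isolated [set: X] = set0 ->
  highly_top_trans alpha ->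
  forall d, (1 <= d)%N -> top_trans (diag_action alpha d).
Proof.
move=> aX iso hT d d1 U V oU oV [u [Uu _]] [v [Vv _]].
have [g [_ [[f [Uf _] <-] [Vgf _]]]] := hT d d1 U V oU oV
  (perfect_distinct_tuples aX iso oU (ex_intro _ u Uu))
  (perfect_distinct_tuples aX iso oV (ex_intro _ v Vv)).
by exists g, (diag_action alpha d g f); split => //; exists f.
Qed.

Lemma diag_highly_top_trans : accessible_space X -> isolated [set: X] = set0 ->
  (forall g, continuous (alpha g)) -> (forall g, injective (alpha g)) ->
  (forall d, (1 <= d)%N -> top_trans (diag_action alpha d)) ->
  highly_top_trans alpha.
Proof.
move=> aX iso cont inj hT d d1 U V oU oV [u [Uu _]] [v [Vv _]].
have [g [_ [[f [Uf _] <-] [Vgf _]]]] :=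
  hT d d1 U V oU oV (ex_intro _ u (conj Uu I)) (ex_intro _ v (conj Vv I)).
have oUV : open (U `&` (diag_action alpha d g @^-1` V)).
  exact: openI oU (open_comp_preimage (cont g) oV).
have [w [[Uw Vgw] iw]] :=
  perfect_distinct_tuples aX iso oUV (ex_intro _ f (conj Uf Vgf)).
exists g, (diag_action alpha d g w); split; first by exists w.
by split => //; exact: inj_comp.
Qed.

Lemma highly_trans_highly_top_trans : hausdorff_space X ->
  dense (isolated [set: X]) -> highly_trans_on (isolated [set: X]) alpha ->
  highly_top_trans alpha.
Proof.
move=> hX dI [_ hT] d _ U V oU oV U0 V0.
have [a [Ua ia] Ia] := dense_isolated_distinct_tuples hX dI oU U0.
have [b [Vb ib] Ib] := dense_isolated_distinct_tuples hX dI oV V0.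
have [g gab] := hT d a b ia ib Ia Ib.
exists g, b; split => //; exists a => //.
exact: funext.
Qed.

End topologically_transitive_actions.

Section group_actions.
Variables (G : groupType) (X : topologicalType) (alpha : G -> X -> X).
Hypotheses (alpha_action : is_action alpha)
  (alpha_cont : forall g, continuous (alpha g)).

Lemma isolated_action g x :
  isolated [set: X] x -> isolated [set: X] (alpha g x).
Proof.
have [act1 actM] := alpha_action.
move=> /isolatedT_nbhs1 nx; apply/isolatedT_nbhs1.
have nx' : nbhs (alpha g^-1 (alpha g x)) [set x] by rewrite -actM mulgV act1.
have := alpha_cont nx' : nbhs (alpha g x) (alpha g^-1 @^-1` [set x]).
apply: filterS => y /= <-.
by rewrite -actM mulVg act1.
Qed.

Lemma highly_top_trans_dense_isolated x :
  highly_top_trans alpha -> isolated [set: X] x -> dense (isolated [set: X]).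
Proof.
move=> hT Ix V V0 oV.
have oV1 : open [set f : {ptws 'I_1 -> X} | V (f ord0)].
  by rewrite openE => f Vf; apply: nbhs_proj; exact: open_nbhs_nbhs.
have inj1 (y : X) : injective (fun _ : 'I_1 => y).
  by move=> i j _; rewrite !ord1.
have [v Vv] := V0.
have [g Vgx] := d_top_trans_isolated (hT 1 isT) (inj1 x) (fun _ => Ix) oV1
  (ex_intro _ (fun _ => v) (conj Vv (inj1 v))).
by exists (alpha g x); split => //; exact: isolated_action.
Qed.

Lemma highly_top_trans_highly_trans : accessible_space X ->
  infinite_set [set: X] -> dense (isolated [set: X]) ->
  highly_top_trans alpha -> highly_trans_on (isolated [set: X]) alpha.
Proof.
move=> aX infX dI hT; split.
  by move=> fI; apply: infX; have := fI; rewrite (dense_finite_setT aX dI fI).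
case=> [|d] x y ix iy Ix Iy; first by exists 1%g => -[].
have oy : open [set y : {ptws 'I_d.+1 -> X}].
  by apply: open_set1_ptws => i; exact/isolatedT_nbhs1.
have [g gxy] := d_top_trans_isolated (hT d.+1 isT) ix Ix oy
  (ex_intro _ y (conj erefl iy)).
by exists g => i; rewrite -gxy.
Qed.

End group_actions.

Theorem mainTheorem5 (G : groupType) (X : topologicalType)
  (alpha : G -> X -> X) :
  homeo_action alpha -> hausdorff_space X -> infinite_set [set: X] ->
  (highly_top_trans alpha <->
     ((isolated [set: X] = set0 /\
       forall d, (1 <= d)%N -> top_trans (diag_action alpha d))
      \/
      (dense (isolated [set: X]) /\
       highly_trans_on (isolated [set: X]) alpha))).
Proof.
move=> [act [cont bij]] hX infX.
have aX := hausdorff_accessible hX.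
split => [hT|[[iso0 hT]|[dI hT]]].
- have [[x Ix]|no_iso] := pselect (exists x, isolated [set: X] x).
    have dI := highly_top_trans_dense_isolated act cont hT Ix.
    by right; split => //; exact: highly_top_trans_highly_trans.
  have iso0 : isolated [set: X] = set0.
    by apply/seteqP; split => // x Ix; apply: no_iso; exists x.
  by left; split => //; exact: highly_top_trans_diag.
- by apply: diag_highly_top_trans => // g; exact: bij_inj.
- exact: highly_trans_highly_top_trans.
Qed.
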